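(* Let $(\mathcal M,\mathrm d_{\mathcal M})$ be a metric space, $k\ge1$, and $Y=y_1,\dots,y_{k+1}\in\mathcal M^{k+1}$. Let $D=\min_{1\le i\le k}\mathrm d_{\mathcal M}(y_i,y_{i+1})$, let $i^*\in\{1,\dots,k\}$ be an index with $\mathrm d_{\mathcal M}(y_{i^*},y_{i^*+1})=D$, and let $Y'\in\mathcal M^k$ be the curve obtained from $Y$ by deleting $y_{i^*}$. Then $\mathrm d_{dF}(Y,Y')\le D$, and $Y'$ is a $2$-approximate $k$-simplification of $Y$.
   Context: A curve of complexity $m$ in a metric space $(\mathcal M,\mathrm d_{\mathcal M})$ is a sequence $p=p_1,\dots,p_m$ of points of $\mathcal M$; $\mathcal M^m$ denotes the set of such curves. For $p\in\mathcal M^m$ and $q\in\mathcal M^k$, a traversal of $p$ and $q$ is a sequence of index pairs $(i_1,j_1),\dots,(i_t,j_t)$ with $(i_1,j_1)=(1,1)$, $(i_t,j_t)=(m,k)$, and for every $u<t$: $i_{u+1}-i_u\in\{0,1\}$, $j_{u+1}-j_u\in\{0,1\}$ and $(i_{u+1}-i_u)+(j_{u+1}-j_u)\ge 1$. Its cost is $\max_u \mathrm d_{\mathcal M}(p_{i_u},q_{j_u})$. The discrete Fréchet distance $\mathrm d_{dF}(p,q)$ is the minimum cost over all traversals of $p$ and $q$. For $p\in\mathcal M^m$ and $\alpha\ge 1$, a curve $p'\in\mathcal M^k$ is an $\alpha$-approximate $k$-simplification of $p$ if $\mathrm d_{dF}(p,p')\le\alpha\,\mathrm d_{dF}(p,q)$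 for every $q\in\mathcal M^k$. *)

From Stdlib Require Import Reals Lra List ClassicalEpsilon.
Import ListNotations.
Open Scope R_scope.

Record MetricSpace := {
  carrier :> Type;
  dist : carrier -> carrier -> R;
  dist_nonneg : forall x y, 0 <= dist x y;
  dist_eq0 : forall x y, dist x y = 0 <-> x = y;
  dist_sym : forall x y, dist x y = dist y x;
  dist_tri : forall x y z, dist x z <= dist x y + dist y z
}.

Section Frechet.
Variable M : MetricSpace.

(* Curves are lists of points; complexity = length. Indices are 0-based. *)
Definition step (a b : nat * nat) : Prop :=
  let '(i1, j1) := a in let '(i2, j2) := b in
  (i2 = i1 \/ i2 = S i1) /\ (j2 = j1 \/ j2 = S j1) /\ (i2, j2) <> (i1, j1).

Fixpoint steps_ok (T : list (nat * nat)) : Prop :=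
  match T with
  | a :: ((b :: _) as t) => step a b /\ steps_ok t
  | _ => True
  end.

Definition is_traversal (m k : nat) (T : list (nat * nat)) : Prop :=
  hd_error T = Some (0%nat, 0%nat) /\
  last T (0%nat, 0%nat) = (Nat.pred m, Nat.pred k) /\
  steps_ok T.

Definition pair_dist (p q : list M) (ij : nat * nat) : R :=
  match nth_error p (fst ij), nth_error q (snd ij) with
  | Some a, Some b => dist M a b
  | _, _ => 0
  end.

(* cost = max over the traversal of the distances (all distances are >= 0) *)
Definition cost (p q : list M) (T : list (nat * nat)) : R :=
  fold_right Rmax 0 (map (pair_dist p q) T).

Definition is_dF_value (p q : list M) (r : R) : Prop :=
  (exists T, is_traversal (length p) (length q) T /\ cost p q T = r) /\
  (forall T, is_traversal (length p) (length q) T -> r <= cost p q T).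

Definition dF (p q : list M) : R :=
  epsilon (inhabits 0) (is_dF_value p q).

Definition approx_simplification (alpha : R) (k : nat) (p p' : list M) : Prop :=
  length p' = k /\
  forall q : list M, length q = k -> dF p p' <= alpha * dF p q.

(* distance between consecutive points y_i and y_{i+1} (0-based) *)
Definition seg_len (Y : list M) (i : nat) : R :=
  match nth_error Y i, nth_error Y (S i) with
  | Some a, Some b => dist M a b
  | _, _ => 0
  end.

Definition delete_at (Y : list M) (i : nat) : list M :=
  firstn i Y ++ skipn (S i) Y.

End Frechet.
Arguments dF {M}.
Arguments seg_len {M}.
Arguments delete_at {M}.
Arguments approx_simplification {M}.

From Pilot Require Import Defs.
From Stdlib Require Import Reals List.
Open Scope R_scope.
From Stdlib Require Import Lra Lia Classical ClassicalEpsilon.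
Import ListNotations.

(* Upper bound: the traversal that walks diagonally through y_0..y_s, then
   pairs y_{i} with y'_{i-1} = y_i, only ever pairs distinct points once,
   namely y_s with y'_s = y_{s+1}; hence dF(Y, Y') <= D.

   Lower bound: every traversal of Y against a curve q with fewer points
   must advance in Y alone at least once, pairing some y_i and y_{i+1}
   with the same q_j; by the triangle inequality its cost is at least
   d(y_i, y_{i+1}) / 2 >= D / 2.  Hence 2 dF(Y, q) >= D >= dF(Y, Y'). *)

Lemma min_attained_in_finite_set (L : list R) : forall (P : R -> Prop),
  (exists x, P x) -> (forall x, P x -> In x L) ->
  exists m, P m /\ forall x, P x -> m <= x.
Proof.
  induction L as [|a L IH]; intros P [x0 Hx0] HL.
  - destruct (HL x0 Hx0).
  - destruct (classic (exists x, P x /\ x <> a)) as [Hother|Honly_a].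
    + destruct (IH (fun x => P x /\ x <> a)) as [m [[Pm Hma] Hmin]].
      * exact Hother.
      * intros x [Px Hxa]. destruct (HL x Px); [congruence|assumption].
      * destruct (classic (P a)) as [Pa|nPa].
        -- destruct (Rlt_le_dec a m).
           ++ exists a. split; [assumption|]. intros x Px.
              destruct (Req_dec x a) as [|Hxa]; [lra|].
              specialize (Hmin x (conj Px Hxa)). lra.
           ++ exists m. split; [assumption|]. intros x Px.
              destruct (Req_dec x a); [lra|]. apply Hmin; auto.
        -- exists m. split; [assumption|]. intros x Px.
           apply Hmin. split; [assumption|]. intro; subst; contradiction.
    + assert (Hall : forall x, P x -> x = a).
      { intros x Px. apply NNPP. intro Hn. apply Honly_a. exists x; auto. }
      exists a. split; [rewrite <- (Hall x0 Hx0); exact Hx0|].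
      intros x Px. rewrite (Hall x Px). lra.
Qed.

Lemma traversal_of_walk (g : nat -> nat * nat) (m n N : nat) :
  g 0%nat = (0, 0)%nat -> g N = (pred m, pred n) ->
  (forall i, step (g i) (g (S i))) ->
  is_traversal m n (map g (seq 0 (S N))).
Proof.
  intros Hstart Hend Hstep. split; [|split].
  - simpl. rewrite Hstart. reflexivity.
  - rewrite seq_S, map_app. simpl. rewrite last_last. exact Hend.
  - clear Hstart Hend. generalize 0%nat.
    induction N as [|N IH]; intros a; simpl; [exact I|].
    split; [apply Hstep|]. exact (IH (S a)).
Qed.

(* Every pair of nonempty curves has a traversal: first along p, then along q. *)
Lemma traversal_exists (m n : nat) : (1 <= m)%nat -> (1 <= n)%nat ->
  exists T, is_traversal m n T.
Proof.
  intros Hm Hn. destruct m as [|m]; [lia|]. destruct n as [|n]; [lia|].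
  exists (map (fun i => if Nat.leb i m then (i, 0%nat) else (m, (i - m)%nat))
             (seq 0 (S (m + n)))).
  apply traversal_of_walk.
  - reflexivity.
  - simpl. destruct (Nat.leb_spec (m + n) m); f_equal; lia.
  - intros i. unfold step.
    destruct (Nat.leb_spec i m); destruct (Nat.leb_spec (S i) m); cbn -[Nat.sub];
      (split; [|split]);
      try (intro Hc; pose proof (f_equal fst Hc); pose proof (f_equal snd Hc);
           cbn -[Nat.sub] in *; lia); lia.
Qed.

Lemma walk_has_horizontal_step (T : list (nat * nat)) : forall a,
  steps_ok (a :: T) ->
  (snd (last (a :: T) (0, 0)) + fst a < fst (last (a :: T) (0, 0)) + snd a)%nat ->
  exists i j, In (i, j) (a :: T) /\ In (S i, j) (a :: T).
Proof.
  induction T as [|b T IH]; intros a Hsteps Hend.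
  - simpl in Hend. lia.
  - destruct Hsteps as [Hab Hsteps].
    change (last (a :: b :: T) (0, 0)%nat) with (last (b :: T) (0, 0)%nat) in Hend.
    destruct a as [i1 j1], b as [i2 j2]. simpl in Hab.
    destruct Hab as [[Hi|Hi] [[Hj|Hj] Hne]]; subst.
    + exfalso; apply Hne; reflexivity.
    + destruct (IH _ Hsteps) as [i [j [H1 H2]]]; [simpl in *; lia|].
      exists i, j. split; right; assumption.
    + exists i1, j1. split; [left; reflexivity|right; left; reflexivity].
    + destruct (IH _ Hsteps) as [i [j [H1 H2]]]; [simpl in *; lia|].
      exists i, j. split; right; assumption.
Qed.

(* Along a walk both coordinates are monotone, so every visited pair is
   bounded by the final one. *)
Lemma walk_bounded_by_last (T : list (nat * nat)) : forall a x,
  steps_ok (a :: T) -> In x (a :: T) ->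
  (fst x <= fst (last (a :: T) (0, 0)) /\ snd x <= snd (last (a :: T) (0, 0)))%nat.
Proof.
  induction T as [|b T IH]; intros a x Hsteps Hx.
  - destruct Hx as [<-|[]]. simpl. lia.
  - destruct Hsteps as [Hab Hsteps].
    change (last (a :: b :: T) (0, 0)%nat) with (last (b :: T) (0, 0)%nat).
    destruct Hx as [<-|Hx]; [|apply IH; assumption].
    assert (Hb := IH b b Hsteps (or_introl eq_refl)).
    destruct a as [i1 j1], b as [i2 j2]. simpl in Hab, Hb |- *.
    destruct Hab as [Hi [Hj _]]. lia.
Qed.

Lemma traversal_horizontal_step (m n : nat) (T : list (nat * nat)) :
  (1 <= n)%nat -> (n < m)%nat -> is_traversal m n T ->
  exists i j, In (i, j) T /\ In (S i, j) T /\ (S i < m)%nat /\ (j < n)%nat.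
Proof.
  intros Hn Hnm [Hhd [Hlast Hsteps]].
  destruct T as [|a T]; [discriminate|]. simpl in Hhd. injection Hhd as ->.
  destruct (walk_has_horizontal_step T (0, 0)%nat Hsteps) as [i [j [H1 H2]]].
  { rewrite Hlast. simpl. lia. }
  destruct (walk_bounded_by_last T (0, 0)%nat _ Hsteps H2) as [B1 B2].
  rewrite Hlast in B1, B2. simpl in B1, B2.
  exists i, j. repeat split; [exact H1|exact H2|lia|lia].
Qed.

Section DiscreteFrechet.
Variable M : MetricSpace.

Lemma dist_refl (x : M) : Defs.dist M x x = 0.
Proof. apply Defs.dist_eq0. reflexivity. Qed.

Lemma seg_len_nonneg (Y : list M) (i : nat) : 0 <= seg_len Y i.
Proof.
  unfold seg_len. destruct (nth_error Y i); [|lra].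
  destruct (nth_error Y (S i)); [apply Defs.dist_nonneg|lra].
Qed.

Lemma cost_in_finite_set (p q : list M) (T : list (nat * nat)) :
  In (cost M p q T)
     (0 :: map (pair_dist M p q) (list_prod (seq 0 (length p)) (seq 0 (length q)))).
Proof.
  induction T as [|a T IH]; [left; reflexivity|].
  change (cost M p q (a :: T)) with (Rmax (pair_dist M p q a) (cost M p q T)).
  unfold Rmax at 1. destruct (Rle_dec (pair_dist M p q a) (cost M p q T)); [exact IH|].
  unfold pair_dist at 1.
  destruct (nth_error p (fst a)) eqn:Ep; [|left; reflexivity].
  destruct (nth_error q (snd a)) eqn:Eq; [|left; reflexivity].
  right. apply in_map_iff. exists a. split.
  - unfold pair_dist. rewrite Ep, Eq. reflexivity.
  - destruct a as [i j]. apply in_prod; apply in_seq; simpl in *.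
    + assert (i < length p)%nat by (apply nth_error_Some; congruence). lia.
    + assert (j < length q)%nat by (apply nth_error_Some; congruence). lia.
Qed.

Lemma cost_ge_pair (p q : list M) (T : list (nat * nat)) (x : nat * nat) :
  In x T -> pair_dist M p q x <= cost M p q T.
Proof.
  induction T as [|a T IH]; simpl; [tauto|]. intros [Hx|Hx];
  change (cost M p q (a :: T)) with (Rmax (pair_dist M p q a) (cost M p q T)).
  - subst. apply Rmax_l.
  - eapply Rle_trans; [apply IH; exact Hx|apply Rmax_r].
Qed.

Lemma cost_le_bound (p q : list M) (T : list (nat * nat)) (c : R) : 0 <= c ->
  (forall x, In x T -> pair_dist M p q x <= c) -> cost M p q T <= c.
Proof.
  intros Hc. induction T as [|a T IH]; intros Hall; [unfold cost; simpl; lra|].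
  change (cost M p q (a :: T)) with (Rmax (pair_dist M p q a) (cost M p q T)).
  apply Rmax_lub; [apply Hall; left; reflexivity|].
  apply IH. intros; apply Hall; right; assumption.
Qed.

Lemma dF_is_min_cost (p q : list M) : p <> [] -> q <> [] ->
  is_dF_value M p q (dF p q).
Proof.
  intros Hp Hq.
  assert (Hex : exists r, is_dF_value M p q r).
  { destruct (traversal_exists (length p) (length q)) as [T0 HT0].
    - destruct p; [congruence|simpl; lia].
    - destruct q; [congruence|simpl; lia].
    - destruct (min_attained_in_finite_set
                  (0 :: map (pair_dist M p q)
                         (list_prod (seq 0 (length p)) (seq 0 (length q))))
                  (fun r => exists T, is_traversal (length p) (length q) T
                                      /\ cost M p q T = r))
        as [r [Hr Hmin]].
      + exists (cost M p q T0), T0. auto.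
      + intros x [T [_ <-]]. apply cost_in_finite_set.
      + exists r. split; [exact Hr|]. intros T HT. apply Hmin. exists T; auto. }
  exact (epsilon_spec (inhabits 0) _ Hex).
Qed.

Lemma seg_len_le_twice_dF (p q : list M) : q <> [] -> (length q < length p)%nat ->
  exists i, (S i < length p)%nat /\ seg_len p i <= 2 * dF p q.
Proof.
  intros Hq Hlen.
  assert (Hp : p <> []) by (intro E; rewrite E in Hlen; simpl in Hlen; lia).
  assert (Hqlen : (1 <= length q)%nat) by (destruct q; [congruence|simpl; lia]).
  destruct (dF_is_min_cost p q Hp Hq) as [[T [HT Hcost]] _].
  destruct (traversal_horizontal_step _ _ T Hqlen Hlen HT)
    as [i [j [Hij [HSij [Hi Hj]]]]].
  exists i. split; [exact Hi|].
  pose proof (cost_ge_pair p q T _ Hij) as Hfst.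
  pose proof (cost_ge_pair p q T _ HSij) as Hsnd.
  rewrite Hcost in Hfst, Hsnd.
  unfold pair_dist, seg_len in *. cbn [fst snd] in Hfst, Hsnd.
  destruct (nth_error p i) as [a|] eqn:Ea; [|apply nth_error_None in Ea; lia].
  destruct (nth_error p (S i)) as [b|] eqn:Eb; [|apply nth_error_None in Eb; lia].
  destruct (nth_error q j) as [c|] eqn:Ec; [|apply nth_error_None in Ec; lia].
  pose proof (Defs.dist_tri M a c b) as Htri. rewrite (Defs.dist_sym M c b) in Htri. lra.
Qed.

Lemma delete_at_length (Y : list M) (s : nat) : (s < length Y)%nat ->
  length (delete_at Y s) = pred (length Y).
Proof.
  intros H. unfold delete_at. rewrite length_app, length_firstn, length_skipn. lia.
Qed.

Lemma delete_at_before (Y : list M) (s j : nat) : (j < s)%nat -> (s < length Y)%nat ->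
  nth_error (delete_at Y s) j = nth_error Y j.
Proof.
  intros Hj Hs. unfold delete_at. rewrite nth_error_app1.
  - rewrite nth_error_firstn. destruct (Nat.ltb_spec j s); [reflexivity|lia].
  - rewrite length_firstn. lia.
Qed.

Lemma delete_at_after (Y : list M) (s j : nat) : (s <= j)%nat -> (s < length Y)%nat ->
  nth_error (delete_at Y s) j = nth_error Y (S j).
Proof.
  intros Hj Hs. unfold delete_at. rewrite nth_error_app2.
  - rewrite nth_error_skipn, length_firstn. f_equal. lia.
  - rewrite length_firstn. lia.
Qed.

Lemma dF_delete_at_le_seg_len (Y : list M) (s : nat) : (S s < length Y)%nat ->
  dF Y (delete_at Y s) <= seg_len Y s.
Proof.
  intros Hs.
  assert (Hlen : length (delete_at Y s) = pred (length Y)) by (apply delete_at_length; lia).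
  assert (HY : Y <> []) by (intro E; rewrite E in Hs; simpl in Hs; lia).
  assert (HY' : delete_at Y s <> []) by (intro E; rewrite E in Hlen; simpl in Hlen; lia).
  destruct (dF_is_min_cost Y (delete_at Y s) HY HY') as [_ Hmin].
  set (g := fun i => if Nat.leb i s then (i, i) else (i, pred i)).
  assert (HT : is_traversal (length Y) (length (delete_at Y s))
                 (map g (seq 0 (S (pred (length Y)))))).
  { rewrite Hlen. apply traversal_of_walk.
    - reflexivity.
    - unfold g. destruct (Nat.leb_spec (pred (length Y)) s); [lia|]. reflexivity.
    - intros i. unfold g, step.
      destruct (Nat.leb_spec i s); destruct (Nat.leb_spec (S i) s); simpl;
        (split; [|split]); try (intro Hc; injection Hc; lia); lia. }
  eapply Rle_trans; [apply Hmin; exact HT|].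
  apply cost_le_bound; [apply seg_len_nonneg|]. intros x Hx.
  apply in_map_iff in Hx. destruct Hx as [i [<- Hi]]. apply in_seq in Hi.
  unfold g, pair_dist. destruct (Nat.leb_spec i s); simpl.
  - destruct (Nat.eq_dec i s) as [->|Hne].
    + rewrite delete_at_after by lia. unfold seg_len. lra.
    + rewrite delete_at_before by lia. destruct (nth_error Y i); [|apply seg_len_nonneg].
      rewrite dist_refl. apply seg_len_nonneg.
  - rewrite delete_at_after by lia. replace (S (pred i)) with i by lia.
    destruct (nth_error Y i); [|apply seg_len_nonneg].
    rewrite dist_refl. apply seg_len_nonneg.
Qed.

End DiscreteFrechet.

Theorem mainTheorem9 (M : MetricSpace) (k : nat) (Y : list M) (D : R) (istar : nat)
  (hk : (1 <= k)%nat) (hY : length Y = S k)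
  (hDmin : forall i, (i < k)%nat -> D <= seg_len Y i)
  (histar : (istar < k)%nat) (hD : seg_len Y istar = D) :
  dF Y (delete_at Y istar) <= D /\
  approx_simplification 2 k Y (delete_at Y istar).
Proof.
  assert (Hupper : dF Y (delete_at Y istar) <= D).
  { rewrite <- hD. apply dF_delete_at_le_seg_len. lia. }
  split; [exact Hupper|]. split.
  - rewrite delete_at_length; lia.
  - intros q Hq.
    assert (Hq_ne : q <> []) by (intro E; rewrite E in Hq; simpl in Hq; lia).
    destruct (seg_len_le_twice_dF M Y q Hq_ne ltac:(lia)) as [i [Hi Hseg]].
    specialize (hDmin i ltac:(lia)). lra.
Qed.
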